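(* Let $X$ be a Banach space and $(A_m)_{m\in\mathbb{Z}}$ a sequence of invertible bounded linear operators on $X$ with $\sup_m\lVert A_m\rVert<\infty$ admitting an exponential dichotomy; let $c>0$ be a constant as described in the context (with $B=l^\infty$), and fix $D,r>0$. Then there exists $\delta>0$ such that the following holds. Let $g_n\colon X\to X$, $n\in\mathbb{Z}$, be differentiable maps with $\lVert d_xg_n\rVert\le c/2$, $\lVert d_xg_n-d_yg_n\rVert\le D\lVert x-y\rVert^r$ for all $x,y\in X$, $n\in\mathbb{Z}$, and $\sup_{x\in X}\lVert g_n(x)\rVert\le\delta$ for all $n$. If $(y_n)_{n\in\mathbb{Z}}\subset X$ satisfies $y_{n+1}=A_ny_n+g_n(y_n)$ for all $n\in\mathbb{Z}$ and $$\lambda:=\limsup_{n\to\infty}\frac1n\log\lVert y_n\rVert>0,$$ then there exists $(x_n)_{n\in\mathbb{Z}}\subset X$ with $x_{n+1}=A_nx_n$ for all $n\in\mathbb{Z}$ and $\lambda=\limsup_{n\to\infty}\frac1n\log\lVert x_n\rVert$.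
   Context: Exponential dichotomy: with $\mathcal A(m,n)=A_{m-1}\cdots A_n$ ($m>n$), $\mathrm{Id}$ ($m=n$), $A_m^{-1}\cdots A_{n-1}^{-1}$ ($m<n$), there exist projections $P_m$ with $P_{m+1}A_m=A_mP_m$ and $C,\lambda_0>0$ with $\lVert\mathcal A(m,n)P_n\rVert\le Ce^{-\lambda_0(m-n)}$ ($m\ge n$) and $\lVert\mathcal A(m,n)(\mathrm{Id}-P_n)\rVert\le Ce^{-\lambda_0(n-m)}$ ($m\le n$). The constant $c>0$ is such that there is $K>0$ for which every sequence $(B_m)$ of bounded operators on $X$ with $\sup_m\lVert A_m-B_m\rVert\le c$ admits an exponential dichotomy and the operator $(\mathbb B\mathbf x)_n=B_{n-1}x_{n-1}$ on the space of bounded sequences $(x_n)_{n\in\mathbb{Z}}\subset X$ with the sup norm has $\mathrm{Id}-\mathbb B$ invertible with $\lVert(\mathrm{Id}-\mathbb B)^{-1}\rVert\le K$. *)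

From HB Require Import structures.
From mathcomp Require Import all_boot all_order all_algebra.
From mathcomp Require Import all_classical all_reals all_analysis.
Set Implicit Arguments. Unset Strict Implicit. Unset Printing Implicit Defensive.
Import Order.TTheory GRing.Theory Num.Theory.
Import numFieldNormedType.Exports.
Local Open Scope ring_scope.

Section Defs.
Context {R : realType} {X : normedModType R}.

Definition blin (f : X -> X) : Prop :=
  (forall (a : R) (x y : X), f (a *: x + y) = a *: f x + f y) /\
  exists M : R, forall x, `|f x| <= M * `|x|.

(* forward cocycle: iterc B n k = B_{n+k-1} o ... o B_n  (k steps from n) *)
Fixpoint iterc (B : int -> X -> X) (n : int) (k : nat) (x : X) : X :=
  match k with
  | 0%N => x
  | k'.+1 => B (n + k'%:Z) (iterc B n k' x)
  end.

(* B(m,n) for n <= m *)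
Definition cocycle (B : int -> X -> X) (m n : int) : X -> X :=
  iterc B n `|m - n|%N.

(* For m <= n the operator B(m,n)(Id - P_n) is the
   inverse of B(n,m) restricted to ker P_m -> ker P_n; for invertible B this
   is exactly A_m^{-1} ... A_{n-1}^{-1}(Id - P_n) as in the paper. *)
Definition exp_dichotomy (B : int -> X -> X) : Prop :=
  exists P : int -> X -> X,
    (forall m, blin (P m)) /\
    (forall m x, P m (P m x) = P m x) /\
    (forall m x, P (m + 1) (B m x) = B m (P m x)) /\
    (forall m (w : X), P m w = 0 -> B m w = 0 -> w = 0) /\
    (forall m (v : X), P (m + 1) v = 0 -> exists w, P m w = 0 /\ B m w = v) /\
    exists C lam : R, 0 < C /\ 0 < lam /\
      (forall m n x, n <= m ->
         `|cocycle B m n (P n x)| <= C * expR (- lam * (m - n)%:~R) * `|x|) /\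
      (forall m n x, m <= n -> exists w, P m w = 0 /\
         cocycle B n m w = x - P n x /\
         `|w| <= C * expR (- lam * (n - m)%:~R) * `|x|).

Definition bnd_seq (z : int -> X) : Prop := exists M : R, forall n, `|z n| <= M.

(* Id - BB is invertible on l^oo(Z, X), (BB x)_n = B_{n-1} x_{n-1},
   with inverse of norm <= K *)
Definition IdmB_inv_le (B : int -> X -> X) (K : R) : Prop :=
  forall z : int -> X, bnd_seq z ->
    exists x : int -> X, bnd_seq x /\
      (forall n, x n - B (n - 1) (x (n - 1)) = z n) /\
      (forall x' : int -> X, bnd_seq x' ->
         (forall n, x' n - B (n - 1) (x' (n - 1)) = z n) -> x' = x) /\
      (forall M : R, (forall n, `|z n| <= M) -> forall n, `|x n| <= K * M).

Definition admissible_c (A : int -> X -> X) (c : R) : Prop :=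
  0 < c /\ exists K : R, 0 < K /\
    forall B : int -> X -> X, (forall m, blin (B m)) ->
      (forall m x, `|A m x - B m x| <= c * `|x|) ->
      exp_dichotomy B /\ IdmB_inv_le B K.

Definition elog (t : R) : \bar R := if t == 0 then -oo%E else (ln t)%:E.

Definition lyap (y : int -> X) : \bar R :=
  limn_esup (fun n : nat => ((n%:R)^-1)%:E * elog `|y n%:Z|)%E.

End Defs.

(* Since the g_n are uniformly bounded, z_n := g_(n-1)(y_(n-1)) is a bounded
   sequence.  Admissibility of c (applied to B = A) makes Id - 𝔸 invertible on
   l^oo, so some bounded w solves w_n - A_(n-1) w_(n-1) = z_n, and x := y - w
   solves the linear equation.  A bounded perturbation cannot change a positive
   upper Lyapunov exponent: once |x_n| <= e^(t n) with t >= 0, also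
   |x_n| + M <= (1 + M) e^(t n), and the factor 1 + M disappears in the limit
   of (1/n) log. *)
From HB Require Import structures.
From mathcomp Require Import all_boot all_order all_algebra.
From mathcomp Require Import all_classical all_reals all_analysis.
From mathcomp Require Import lra.
Set Implicit Arguments. Unset Strict Implicit. Unset Printing Implicit Defensive.
Import Order.TTheory GRing.Theory Num.Theory.
Import numFieldNormedType.Exports.
Local Open Scope ring_scope.

Section limn_esup_near.
Context {R : realType}.
Local Open Scope classical_set_scope.
Local Open Scope ereal_scope.

Lemma limn_esup_le_near (u : (\bar R)^nat) (t : \bar R) :
  (\forall n \near \oo, u n <= t) -> limn_esup u <= t.
Proof.
move=> ut; rewrite /limn_esup limf_esupE.
apply: (@le_trans _ _ (ereal_sup (u @` [set n | u n <= t]))).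
  by apply: ereal_inf_lbound; exists [set n | u n <= t].
by apply: ub_ereal_sup => _ [n /= unt <-].
Qed.

Lemma limn_esup_lt_near (u : (\bar R)^nat) (t : \bar R) :
  limn_esup u < t -> \forall n \near \oo, u n < t.
Proof.
rewrite /limn_esup limf_esupE => /ereal_inf_lt [_ [V V_oo <-] supVt].
apply: filterS V_oo => n Vn; apply: le_lt_trans supVt.
by apply: ereal_sup_ubound; exists n.
Qed.

End limn_esup_near.

Section lyap_bounded_perturbation.
Context {R : realType} {X : normedModType R}.

Lemma elog_le_expR (x t : R) (n : nat) : 0 <= x -> (0 < n)%N ->
  (((n%:R)^-1)%:E * elog x <= t%:E)%E = (x <= expR (t * n%:R)).
Proof.
move=> x_ge0 n_gt0; rewrite /elog.
have [->|x_neq0] := eqVneq x 0.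
  by rewrite gt0_muleNy ?lte_fin ?invr_gt0 ?ltr0n // leNye expR_ge0.
have x_gt0 : 0 < x by rewrite lt_neqAle eq_sym x_neq0.
rewrite -EFinM lee_fin mulrC ler_pdivrMr ?ltr0n //.
by rewrite -[LHS]ler_expR (@lnK R x) ?posrE.
Qed.

Lemma lyap_le_of_lt (u v : int -> X) (M t1 t2 : R) :
  (forall n, `|v n - u n| <= M) -> 0 <= t1 -> t1 < t2 ->
  (lyap u < t1%:E)%E -> (lyap v <= t2%:E)%E.
Proof.
move=> vu_le t1_ge0 t12 /limn_esup_lt_near u_lt; apply: limn_esup_le_near.
have M_ge0 : 0 <= M by apply: le_trans (vu_le 0).
have t21_gt0 : 0 < t2 - t1 by lra.
near=> n.
have n_gt0 : (0 < n)%N by near: n; exact: nbhs_infty_gt.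
have un_le : `|u n%:Z| <= expR (t1 * n%:R).
  by rewrite -elog_le_expR //; apply/ltW; near: n.
have one_le_exp : 1 <= expR (t1 * n%:R) by rewrite -expR0 ler_expR mulr_ge0.
have vn_le : `|v n%:Z| <= (1 + M) * expR (t1 * n%:R).
  rewrite -[v _](subrK (u n%:Z)); apply: (le_trans (ler_normD _ _)).
  have := vu_le n%:Z; have := mulr_ge0 M_ge0 (expR_ge0 (t1 * n%:R)); nra.
rewrite elog_le_expR //; apply: le_trans vn_le _.
rewrite -[1 + M]lnK ?posrE; last lra.
rewrite -expRD ler_expR -lerBrDr -mulrBl mulrC -ler_pdivrMr //.
by near: n; exact: nbhs_infty_ger.
Unshelve. all: by end_near.
Qed.

Lemma lyap_le_bounded_perturbation (u v : int -> X) (M : R) :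
  (forall n, `|v n - u n| <= M) -> (lyap v <= maxe (lyap u) 0)%E.
Proof.
move=> vu_le; have m_ge0 : (0 <= maxe (lyap u) 0)%E by rewrite le_max lexx orbT.
case Em : (maxe (lyap u) 0) m_ge0 => [m||] // m_ge0; last exact: leey.
have lu_le : (lyap u <= m%:E)%E by rewrite -Em le_max lexx.
rewrite lee_fin in m_ge0.
apply/lee_addgt0Pr => e e_gt0; rewrite -EFinD.
apply: (lyap_le_of_lt (t1 := m + e / 2) vu_le); [lra|lra|].
by apply: le_lt_trans lu_le _; rewrite lte_fin; lra.
Qed.

Lemma lyap_bounded_perturbation (u v : int -> X) (M : R) :
  (forall n, `|v n - u n| <= M) -> (0 < lyap u)%E -> lyap v = lyap u.
Proof.
move=> vu_le lu_gt0.
have uv_le n : `|u n - v n| <= M by rewrite distrC.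
have := lyap_le_bounded_perturbation vu_le; rewrite (max_l (ltW lu_gt0)) => lv_le.
have := lyap_le_bounded_perturbation uv_le.
have [lv_le0|lv_gt0] := leP (lyap v) 0%E.
  by move=> lu_le0; move: lu_gt0; rewrite ltNge lu_le0.
by move=> lu_le; apply/eqP; rewrite eq_le lv_le lu_le.
Qed.

End lyap_bounded_perturbation.

Section bounded_solutions.
Context {R : realType} {X : normedModType R}.

Lemma blinB (f : X -> X) : blin f -> {morph f : a b / a - b}.
Proof.
by case=> f_lin _ a b; rewrite -scaleN1r addrC f_lin scaleN1r addrC.
Qed.

Lemma admissible_c_IdmB_inv (A : int -> X -> X) (c : R) :
  admissible_c A c -> (forall m, blin (A m)) -> exists K, IdmB_inv_le A K.
Proof.
case=> c_gt0 [K [_ admK]] A_lin; exists K.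
suff dist_le m x : `|A m x - A m x| <= c * `|x| by case: (admK A A_lin dist_le).
by rewrite subrr normr0 mulr_ge0 // ltW.
Qed.

Lemma IdmB_inv_bnd_solution (A : int -> X -> X) (K : R) (f : int -> X) :
  IdmB_inv_le A K -> bnd_seq f ->
  exists2 w, bnd_seq w & forall n, w (n + 1) = A n (w n) + f n.
Proof.
move=> A_inv [M f_le].
have [|w [w_bnd [w_eq _]]] := A_inv (fun n => f (n - 1)); first by exists M.
exists w => // n; have := w_eq (n + 1); rewrite addrK => <-.
by rewrite [RHS]addrC subrK.
Qed.

End bounded_solutions.

Theorem corollary4p3 (R : realType) (X : completeNormedModType R)
  (A : int -> X -> X)
  (hAlin : forall m, blin (A m))
  (hAinv : forall m, bijective (A m))
  (hAsup : exists M : R, forall m x, `|A m x| <= M * `|x|)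
  (hAdich : exp_dichotomy A)
  (c : R) (hc : admissible_c A c)
  (D r : R) (hD : 0 < D) (hr : 0 < r) :
  exists delta : R, 0 < delta /\
    forall g : int -> X -> X,
      (forall n x, differentiable (g n) x) ->
      (forall n x v, `|'d (g n) x v| <= c / 2 * `|v|) ->
      (forall n x y v, `|'d (g n) x v - 'd (g n) y v| <= D * `|x - y| `^ r * `|v|) ->
      (forall n x, `|g n x| <= delta) ->
      forall y : int -> X,
        (forall n, y (n + 1) = A n (y n) + g n (y n)) ->
        (0 < lyap y)%E ->
        exists x : int -> X,
          (forall n, x (n + 1) = A n (x n)) /\ lyap x = lyap y.
Proof.
exists 1; split => // g _ _ _ g_le y y_eq ly_gt0.
have [K A_inv] := admissible_c_IdmB_inv hc hAlin.
have [|w [M w_le] w_eq] := IdmB_inv_bnd_solution (f := fun n => g n (y n)) A_inv.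
  by exists 1.
exists (fun n => y n - w n); split.
  by move=> n; rewrite y_eq w_eq (blinB (hAlin n)) opprD addrACA subrr addr0.
apply: (lyap_bounded_perturbation (M := M)) ly_gt0 => n.
by rewrite addrAC subrr add0r normrN.
Qed.
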